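(* Let $S$ be a Foulis semigroup and $s\in S$ a self-adjoint idempotent ($s\cdot s=s=s^\dagger$). Then $\mathrm{End}(s)=\{t\in S: s\cdot t=t=t\cdot s\}$, with multiplication of $S$, unit $s$, involution $\dagger$, and $[t]_s=s\cdot[t]\cdot s$, is a Foulis semigroup; it coincides with the endomorphism Foulis semigroup of the object $s$ in the dagger kernel category $\mathrm{Kar}_\dagger(S)$. For $s=1$ one recovers $\mathrm{End}(1)=S$.
   Context: A Foulis semigroup is a monoid $(S,\cdot,1)$ with maps $(-)^\dagger:S\to S$ and $[-]:S\to S$ such that: (1) $1^\dagger=1$, $(s\cdot t)^\dagger=t^\dagger\cdot s^\dagger$, $s^{\dagger\dagger}=s$; (2) $[s]\cdot[s]=[s]=[s]^\dagger$; (3) $0:=[1]$ satisfies $0\cdot s=0=s\cdot 0$ for all $s$; (4) for all $s,x$: $s\cdot x=0$ iff $x=[s]\cdot y$ for some $y\in S$. $\mathrm{Kar}_\dagger(S)$ is the category whose objects are self-adjoint idempotents of $S$, whose morphisms $f:s\to t$ are elements $f\in S$ with $f\cdot s=f=t\cdot f$, with composition the multiplication, identity on $s$ equal to $s$, dagger the involution; it is a dagger kernel category in which the kernel of $f:s\to t$ is $s\cdot[f]$. In a dagger kernel category the endomorphisms of an object form a Foulis semigroup with $[u]=\ker(u)\circ\ker(u)^\dagger$. *)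

From Stdlib Require Import Setoid.

Definition is_foulis {T : Type} (mul : T -> T -> T) (one : T)
    (dag : T -> T) (br : T -> T) : Prop :=
  (forall x y z, mul x (mul y z) = mul (mul x y) z) /\
  (forall x, mul one x = x) /\ (forall x, mul x one = x) /\
  dag one = one /\
  (forall x y, dag (mul x y) = mul (dag y) (dag x)) /\
  (forall x, dag (dag x) = x) /\
  (forall x, mul (br x) (br x) = br x /\ br x = dag (br x)) /\
  (* (3) 0 := [1] is absorbing *)
  (forall x, mul (br one) x = br one /\ mul x (br one) = br one) /\
  (forall s x, mul s x = br one <-> exists y, x = mul (br s) y).

Record Foulis := {
  fcar :> Type;
  fmul : fcar -> fcar -> fcar;
  fone : fcar;
  fdag : fcar -> fcar;
  fbr  : fcar -> fcar;
  fax  : is_foulis fmul fone fdag fbr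
}.

Section EndDef.
Variable S : Foulis.

Lemma f_assoc (x y z : S) : fmul S x (fmul S y z) = fmul S (fmul S x y) z.
Proof. destruct (fax S) as [H _]. apply H. Qed.

Lemma f_dagM (x y : S) : fdag S (fmul S x y) = fmul S (fdag S y) (fdag S x).
Proof. destruct (fax S) as [_ [_ [_ [_ [H _]]]]]. apply H. Qed.

Definition in_End (s t : S) : Prop := fmul S s t = t /\ fmul S t s = t.

Definition End_car (s : S) : Type := { t : S | in_End s t }.

Variables (s : S) (hss : fmul S s s = s) (hsd : fdag S s = s).

Lemma End_mul_in (t u : S) : in_End s t -> in_End s u -> in_End s (fmul S t u).
Proof.
  intros [h1 h2] [k1 k2]; split.
  - rewrite f_assoc, h1; reflexivity.
  - rewrite <- f_assoc, k2; reflexivity.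
Qed.

Lemma End_one_in : in_End s s.
Proof. split; exact hss. Qed.

Lemma End_dag_in (t : S) : in_End s t -> in_End s (fdag S t).
Proof.
  intros [h1 h2]; split.
  - rewrite <- hsd. rewrite <- f_dagM, h2; reflexivity.
  - rewrite <- hsd. rewrite <- f_dagM, h1; reflexivity.
Qed.

Lemma End_br_in (t : S) : in_End s (fmul S (fmul S s (fbr S t)) s).
Proof.
  split.
  - rewrite !f_assoc, hss; reflexivity.
  - rewrite <- f_assoc, hss; reflexivity.
Qed.

Definition End_mul (t u : End_car s) : End_car s :=
  exist _ (fmul S (proj1_sig t) (proj1_sig u))
        (End_mul_in _ _ (proj2_sig t) (proj2_sig u)).
Definition End_one : End_car s := exist _ s End_one_in.
Definition End_dag (t : End_car s) : End_car s :=
  exist _ (fdag S (proj1_sig t)) (End_dag_in _ (proj2_sig t)).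
Definition End_br (t : End_car s) : End_car s :=
  exist _ (fmul S (fmul S s (fbr S (proj1_sig t))) s) (End_br_in (proj1_sig t)).
End EndDef.

(* In Kar_dagger(S), the kernel of f : s -> t is the morphism s.[f]
   (given in the paper's context); its dagger is fdag, composition is fmul. *)
Definition kar_ker (S : Foulis) (s f : S) : S := fmul S s (fbr S f).

(* Foulis bracket of the endomorphism semigroup of object s in a dagger
   kernel category: [u] = ker(u) o ker(u)^dagger. *)
Definition kar_End_br (S : Foulis) (s u : S) : S :=
  fmul S (kar_ker S s u) (fdag S (kar_ker S s u)).

(* The
   whole argument rests on one commutation fact: if t s = t, then [t] commutes
   with s.  Indeed t (s [t]) = t [t] = 0, so s [t] = [t] y by axiom (4); hence
   [t] s [t] = [t] [t] y = s [t], and the left-hand side is self-adjoint, so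
   s [t] = (s [t])^dagger = [t] s.  Consequently, for t in End(s), the
   bracket s [t] s of End(s) simplifies to s [t] = [t] s, a self-adjoint
   idempotent, and the zero s [s] s of End(s) is the zero [1] of S. *)

From Stdlib Require Import ProofIrrelevance.

Section FoulisLaws.
Variable S : Foulis.
Notation mul := (fmul S).
Notation one := (fone S).
Notation dag := (fdag S).
Notation br := (fbr S).
Notation zero := (fbr S (fone S)).

Lemma mulA x y z : mul x (mul y z) = mul (mul x y) z.
Proof. destruct (fax S) as (H & _). apply H. Qed.

Lemma mul1l x : mul one x = x.
Proof. destruct (fax S) as (_ & H & _). apply H. Qed.

Lemma mul1r x : mul x one = x.
Proof. destruct (fax S) as (_ & _ & H & _). apply H. Qed.

Lemma dagM x y : dag (mul x y) = mul (dag y) (dag x).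
Proof. destruct (fax S) as (_ & _ & _ & _ & H & _). apply H. Qed.

Lemma dagK x : dag (dag x) = x.
Proof. destruct (fax S) as (_ & _ & _ & _ & _ & H & _). apply H. Qed.

Lemma br_idem x : mul (br x) (br x) = br x.
Proof. destruct (fax S) as (_ & _ & _ & _ & _ & _ & H & _). apply H. Qed.

Lemma br_selfadj x : br x = dag (br x).
Proof. destruct (fax S) as (_ & _ & _ & _ & _ & _ & H & _). apply H. Qed.

Lemma mul0l x : mul zero x = zero.
Proof. destruct (fax S) as (_ & _ & _ & _ & _ & _ & _ & H & _). apply H. Qed.

Lemma mul0r x : mul x zero = zero.
Proof. destruct (fax S) as (_ & _ & _ & _ & _ & _ & _ & H & _). apply H. Qed.

Lemma annihilatorP t x : mul t x = zero <-> exists y, x = mul (br t) y.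
Proof. destruct (fax S) as (_ & _ & _ & _ & _ & _ & _ & _ & H). apply H. Qed.

Lemma mul_br t : mul t (br t) = zero.
Proof. apply annihilatorP. exists one. symmetry. apply mul1r. Qed.

Lemma br_comm s t : dag s = s -> mul t s = t -> mul s (br t) = mul (br t) s.
Proof.
  intros hsd hts.
  assert (Hann : mul t (mul s (br t)) = zero) by (rewrite mulA, hts; apply mul_br).
  apply annihilatorP in Hann as [y Hy].
  (* [t] s [t] = [t] [t] y = s [t] *)
  assert (Hsand : mul (mul (br t) s) (br t) = mul s (br t)).
  { rewrite <- mulA, Hy, mulA, br_idem. reflexivity. }
  (* [t] s [t] is self-adjoint, hence so is s [t] *)
  assert (Hadj : dag (mul s (br t)) = mul s (br t)).
  { rewrite <- Hsand, !dagM, <- !br_selfadj, hsd, mulA. reflexivity. }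
  rewrite <- Hadj at 1. rewrite dagM, <- br_selfadj, hsd. reflexivity.
Qed.

End FoulisLaws.

Lemma End_eq (S : Foulis) (s : S) (a c : End_car S s) :
  proj1_sig a = proj1_sig c -> a = c.
Proof.
  destruct a as [a pa], c as [c pc]; simpl; intros ->.
  f_equal. apply proof_irrelevance.
Qed.

Section EndFoulis.
Variables (S : Foulis) (s : S).
Hypotheses (hss : fmul S s s = s) (hsd : fdag S s = s).
Notation mul := (fmul S).
Notation br := (fbr S).
Notation zero := (fbr S (fone S)).

Lemma End_br_val t : mul t s = t -> mul (mul s (br t)) s = mul s (br t).
Proof.
  intros hts. rewrite (br_comm S s t hsd hts) at 1.
  rewrite <- mulA, hss. symmetry. apply (br_comm S s t hsd hts).
Qed.

Lemma End_zero_val : mul (mul s (br s)) s = zero.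
Proof. rewrite mul_br. apply mul0l. Qed.

Lemma End_br_proj t : mul t s = t ->
  mul (mul s (br t)) (mul s (br t)) = mul s (br t)
  /\ mul s (br t) = fdag S (mul s (br t)).
Proof.
  intros hts. pose proof (br_comm S s t hsd hts) as Hc. split.
  - rewrite Hc at 2. rewrite mulA, <- (mulA S s (br t)), br_idem, Hc,
      <- mulA, hss. reflexivity.
  - rewrite dagM, <- br_selfadj, hsd. exact Hc.
Qed.

(* Axiom (4) for End(s), in terms of underlying elements of S: for u, x in
   End(s), u x = 0 iff x = s [u] y for some y in End(s) (one may take y = x). *)
Lemma End_annihilatorP u x : mul u s = u -> in_End S s x ->
  mul u x = zero <-> exists y, in_End S s y /\ x = mul (mul s (br u)) y.
Proof.
  intros hus [hsx hxs]. split.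
  - intros Hux. apply annihilatorP in Hux as [z Hz].
    exists x. split; [split; assumption|].
    rewrite <- hsx at 1. rewrite Hz, !mulA, <- (mulA S s (br u) (br u)), br_idem.
    reflexivity.
  - intros [y [_ ->]]. rewrite !mulA, hus, mul_br. apply mul0l.
Qed.

Lemma End_is_foulis :
  is_foulis (@End_mul S s) (@End_one S s hss) (@End_dag S s hsd) (@End_br S s hss).
Proof.
  refine (conj _ (conj _ (conj _ (conj _ (conj _ (conj _ (conj _ (conj _ _)))))))).
  - intros x y z. apply End_eq. apply mulA.
  - intros [x [hsx hxs]]. apply End_eq. exact hsx.
  - intros [x [hsx hxs]]. apply End_eq. exact hxs.
  - apply End_eq. exact hsd.
  - intros x y. apply End_eq. apply dagM.
  - intros x. apply End_eq. apply dagK.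
  - intros [x [hsx hxs]].
    destruct (End_br_proj x hxs) as [Hidem Hadj].
    split; apply End_eq; simpl; rewrite End_br_val by exact hxs; assumption.
  - intros x. split; apply End_eq; simpl; rewrite End_zero_val;
      [apply mul0l | apply mul0r].
  - intros [u [hsu hus]] [x hx]. split.
    + intros Hux. apply (f_equal (@proj1_sig _ _)) in Hux. simpl in Hux.
      rewrite End_zero_val in Hux.
      apply (End_annihilatorP u x hus hx) in Hux as [y [hy Hy]].
      exists (exist _ y hy). apply End_eq. simpl.
      rewrite End_br_val; assumption.
    + intros [[y hy] Hy]. apply (f_equal (@proj1_sig _ _)) in Hy. simpl in Hy.
      rewrite End_br_val in Hy by exact hus.
      apply End_eq. simpl. rewrite End_zero_val.
      apply (End_annihilatorP u x hus hx). exists y. split; assumption.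
Qed.

Lemma End_br_kar (t : End_car S s) :
  proj1_sig (@End_br S s hss t) = kar_End_br S s (proj1_sig t).
Proof.
  destruct t as [t [hst hts]]. simpl. unfold kar_End_br, kar_ker.
  rewrite End_br_val by exact hts.
  destruct (End_br_proj t hts) as [Hidem Hadj].
  rewrite <- Hadj. symmetry. exact Hidem.
Qed.

End EndFoulis.

Lemma End_one_full (S : Foulis) (t : S) : in_End S (fone S) t.
Proof. split; [apply mul1l | apply mul1r]. Qed.

Lemma End_one_br (S : Foulis) (t : S) :
  fmul S (fmul S (fone S) (fbr S t)) (fone S) = fbr S t.
Proof. rewrite mul1l, mul1r. reflexivity. Qed.

Theorem mainTheorem17 (S : Foulis) (s : S)
    (hss : fmul S s s = s) (hsd : fdag S s = s) :
  (* End(s) is a Foulis semigroup *)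
  is_foulis (@End_mul S s) (@End_one S s hss) (@End_dag S s hsd) (@End_br S s hss)
  /\ (* it is the endomorphism Foulis semigroup of s in Kar_dagger(S):
        same carrier (morphisms s -> s), composition, identity s, dagger,
        and bracket ker(t) o ker(t)^dagger *)
  (forall t : End_car S s,
      proj1_sig (@End_br S s hss t) = kar_End_br S s (proj1_sig t))
  /\ (* for s = 1 one recovers S *)
  (forall t : S, in_End S (fone S) t)
  /\ (forall t : S, fmul S (fmul S (fone S) (fbr S t)) (fone S) = fbr S t).
Proof.
  split; [exact (End_is_foulis S s hss hsd) |].
  split; [exact (End_br_kar S s hss hsd) |].
  split; [apply End_one_full | apply End_one_br].
Qed.
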